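(* Let $\Delta\ge 1$ and $s\ge 1$ be integers, $r=s\Delta$, and let $\sigma=(\Delta,\Delta,\ldots,\Delta)$ be the partition of $r$ into $s$ parts all equal to $\Delta$. Let $n\ge (r+1)^2$ and $q\ge r\Delta$, and let $H=H(n,r,q\mid\sigma)$. Then \[\nu(H)=\left\lfloor \frac{n\,(q-(q \bmod \Delta))}{r}\right\rfloor,\] where $q\bmod\Delta$ denotes the remainder of $q$ upon division by $\Delta$.
   Context: A $\sigma$-hypergraph $H=H(n,r,q\mid\sigma)$, for a partition $\sigma=(a_1,\ldots,a_s)$ of $r$, is the $r$-uniform hypergraph whose vertex set is the disjoint union of $n$ classes $V_1,\ldots,V_n$, each of size $q$; an $r$-subset $K$ of vertices is an edge iff the multiset of non-zero values $|K\cap V_i|$ ($1\le i\le n$) equals $\sigma$. A matching is a set of pairwise vertex-disjoint edges; $\nu(H)$ is the maximum size of a matching in $H$. *)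

From mathcomp Require Import all_boot all_order.
Set Implicit Arguments. Unset Strict Implicit. Unset Printing Implicit Defensive.

(* Vertices of H(n,r,q|sigma): pairs (i, j) with i : 'I_n the class index and
   j : 'I_q the position inside the class V_i (so |V_i| = q). *)
Definition hvert (n q : nat) := ('I_n * 'I_q)%type.

Definition class_count n q (K : {set hvert n q}) (i : 'I_n) : nat :=
  #|[set v in K | v.1 == i]|.

Definition sigma_edge n r q (sigma : seq nat) (K : {set hvert n q}) : bool :=
  (#|K| == r) &&
  perm_eq [seq c <- [seq class_count K i | i <- enum 'I_n] | 0 < c] sigma.

Definition is_matching n r q (sigma : seq nat) (M : {set {set hvert n q}}) : bool :=
  [forall K in M, sigma_edge r sigma K] &&
  [forall K in M, forall L in M, (K != L) ==> [disjoint K & L]].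

Definition nu n r q (sigma : seq nat) : nat :=
  \max_(M : {set {set hvert n q}} | is_matching r sigma M) #|M|.

(* Every edge meets every class in 0 or Delta vertices, so a matching covers
   at most (q %/ Delta) * Delta vertices of each class, whence the upper bound.
   Conversely, cut every class into q %/ Delta blocks of Delta vertices and list
   all n * (q %/ Delta) blocks so that any s <= n consecutive ones lie in
   distinct classes; taking them s at a time gives the required edges. *)

From mathcomp Require Import all_boot all_order.
From mathcomp Require Import zify.

Set Implicit Arguments.
Unset Strict Implicit.
Unset Printing Implicit Defensive.

Lemma card_class_sum n q (K : {set hvert n q}) :
  #|K| = \sum_(i < n) class_count K i.
Proof.
rewrite -sum1_card (partition_big (fun v : hvert n q => v.1) predT) //=.
by apply: eq_bigr => i _; rewrite /class_count -sum1_card; apply: eq_bigl => v; rewrite !inE.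
Qed.

Lemma sumn_class_counts n q (K : {set hvert n q}) :
  sumn [seq c <- [seq class_count K i | i <- enum 'I_n] | 0 < c] = #|K|.
Proof.
rewrite sumnE big_filter big_map card_class_sum big_rmcond_in => [|i _]; last by case: posnP.
by rewrite big_enum.
Qed.

Lemma class_count_le n q (K : {set hvert n q}) i : class_count K i <= q.
Proof.
apply: (@leq_trans #|pair i @: [set: 'I_q]|).
  apply/subset_leq_card/subsetP => -[j k]; rewrite !inE /= => /andP [_ /eqP ->].
  exact: imset_f.
by rewrite (leq_trans (leq_imset_card _ _)) // cardsT card_ord.
Qed.

Lemma class_count_cover n q (P : {set {set hvert n q}}) i : trivIset P ->
  class_count (cover P) i = \sum_(K in P) class_count K i.
Proof.
move=> trivP; rewrite /class_count -sum1_card.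
rewrite (eq_bigl (fun v => (v \in cover P) && (v.1 == i))); last by move=> v; rewrite !inE.
rewrite big_trivIset_cond //; apply: eq_bigr => K _.
by rewrite -sum1_card; apply: eq_bigl => v; rewrite !inE.
Qed.

Section UpperBound.
Variables (n q r D : nat) (sigma : seq nat).
Hypothesis sigma_dvd : all (dvdn D) sigma.

Lemma sigma_edge_class_count_dvd (K : {set hvert n q}) i :
  sigma_edge r sigma K -> D %| class_count K i.
Proof.
case/andP=> _ permK; have [-> | cK_gt0] := posnP (class_count K i); first exact: dvdn0.
by apply: (allP sigma_dvd); rewrite -(perm_mem permK) mem_filter cK_gt0 map_f ?mem_enum.
Qed.

Lemma matching_edges_trivIset (M : {set {set hvert n q}}) :
  is_matching r sigma M -> {in M, forall K, sigma_edge r sigma K} /\ trivIset M.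
Proof.
case/andP=> /forallP edgeM /forallP disjM; split=> [K KM | ].
  by have := edgeM K; rewrite KM.
apply/trivIsetP => K L KM LM neKL.
by have := disjM K; rewrite KM => /forallP /(_ L); rewrite LM neKL.
Qed.

Lemma matching_card_le (M : {set {set hvert n q}}) :
  is_matching r sigma M -> #|M| * r <= n * (q %/ D * D).
Proof.
case/matching_edges_trivIset=> edgeM trivM.
have -> : #|M| * r = \sum_(i < n) \sum_(K in M) class_count K i.
  rewrite exchange_big -sum_nat_const; apply: eq_bigr => K KM.
  by rewrite -card_class_sum; case/andP: (edgeM K KM) => /eqP.
rewrite -[n in X in _ <= X]card_ord -sum_nat_const leq_sum // => i _.
have dvd_sum : D %| \sum_(K in M) class_count K i.
  by apply: dvdn_sum => K /edgeM /sigma_edge_class_count_dvd.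
rewrite -(divnK dvd_sum) leq_mul2r leq_div2r ?orbT //.
by rewrite -class_count_cover ?class_count_le.
Qed.

Lemma nu_le : 0 < r -> nu n r q sigma <= n * (q %/ D * D) %/ r.
Proof.
by move=> r_gt0; apply/bigmax_leqP => M matchM; rewrite leq_divRL ?matching_card_le.
Qed.

End UpperBound.

Lemma uniform_sigma_edge n q s D (K : {set hvert n q}) : 0 < D ->
  #|K| = s * D -> (forall i, class_count K i = 0 \/ class_count K i = D) ->
  sigma_edge (s * D) (nseq s D) K.
Proof.
move=> D_gt0 cardK ccK; rewrite /sigma_edge cardK eqxx /=.
set l := [seq c <- _ | _].
have /all_pred1P l_nseq : all (pred1 D) l.
  apply/allP => c; rewrite mem_filter => /andP [] /[swap] /mapP [i _ ->] /=.
  by case: (ccK i) => ->.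
have : sumn l = s * D by rewrite sumn_class_counts.
rewrite l_nseq sumn_nseq mulnC => /eqP; rewrite eqn_pmul2r // => /eqP size_l.
by rewrite l_nseq size_l size_nseq.
Qed.

Lemma eq_mulnDr_ltn d a a' x x' : x < d -> x' < d ->
  a * d + x = a' * d + x' -> a = a' /\ x = x'.
Proof.
move=> lt_x lt_x' eq_ax.
have d_gt0 : 0 < d by case: d lt_x {lt_x' eq_ax}.
have := congr1 (divn^~ d) eq_ax; have := congr1 (modn^~ d) eq_ax.
by rewrite /= !modnMDl !divnMDl // !modn_small // !divn_small // !addn0.
Qed.

Section BlockMatching.
Variables (n' q' s D : nat).
Local Notation n := n'.+1.
Local Notation q := q'.+1.
Local Notation m := (q %/ D).
Local Notation N := (n * m %/ s).
Hypothesis s_le_n : s <= n.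

(* Every class is cut into m blocks of D consecutive vertices, and block b is
   block b %/ n of class b %% n, so consecutive blocks lie in distinct classes;
   edge k is made of the blocks k * s, ..., k * s + s - 1. *)
Definition block_vertex b (d : 'I_D) : hvert n q :=
  (inord (b %% n), inord (D * (b %/ n) + d)).

Lemma block_vertex_inj b b' d d' : b < n * m -> b' < n * m ->
  block_vertex b d = block_vertex b' d' -> b = b' /\ d = d'.
Proof.
have in_class c (e : 'I_D) : c < n * m -> D * (c %/ n) + e < q.
  move=> lt_c; have : c %/ n < m by rewrite ltn_divLR // mulnC.
  by have := leq_divM q D; have := ltn_ord e; nia.
move=> lt_b lt_b' [/(congr1 val) eq_class /(congr1 val) eq_pos].
rewrite /= !inordK ?ltn_pmod ?in_class // !(mulnC D) in eq_class eq_pos.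
have [eq_div eq_d] := eq_mulnDr_ltn (ltn_ord d) (ltn_ord d') eq_pos.
by split; [rewrite (divn_eq b n) (divn_eq b' n) eq_div eq_class | apply: val_inj].
Qed.

Definition edge_vertex k (x : 'I_s * 'I_D) := block_vertex (k * s + x.1) x.2.

Definition block_edge k := [set edge_vertex k x | x : 'I_s * 'I_D].

Lemma block_index_lt k (t : 'I_s) : k < N -> k * s + t < n * m.
Proof.
have s_gt0 : 0 < s by case: s t => [[]|].
by rewrite leq_divRL // mulSn; have := ltn_ord t; lia.
Qed.

Lemma edge_vertex_inj k k' x x' : k < N -> k' < N ->
  edge_vertex k x = edge_vertex k' x' -> k = k' /\ x = x'.
Proof.
move: x x' => [t d] [t' d'] lt_k lt_k'; rewrite /edge_vertex /= => eq_v.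
have [eq_b ->] := block_vertex_inj (block_index_lt t lt_k) (block_index_lt t' lt_k') eq_v.
by have [-> /val_inj ->] := eq_mulnDr_ltn (ltn_ord t) (ltn_ord t') eq_b.
Qed.

Lemma edge_vertex_injective k : k < N -> injective (edge_vertex k).
Proof.
by move=> lt_k x x' /(edge_vertex_inj lt_k lt_k) [].
Qed.

Lemma card_block_edge k : k < N -> #|block_edge k| = s * D.
Proof.
by move=> lt_k; rewrite (card_imset _ (edge_vertex_injective lt_k)) card_prod !card_ord.
Qed.

Lemma block_edge_class_count k i : k < N ->
  class_count (block_edge k) i = 0 \/ class_count (block_edge k) i = D.
Proof.
move=> lt_k; set A := [set t : 'I_s | inord ((k * s + t) %% n) == i].
have -> : class_count (block_edge k) i = #|A| * D.
  rewrite -[D in RHS]card_ord -cardsT -cardsX /class_count.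
  rewrite -(card_imset _ (edge_vertex_injective lt_k)).
  apply: eq_card => v; rewrite !inE; apply/andP/imsetP.
    by case=> /imsetP [x _ ->] /= cl_x; exists x; rewrite // !inE andbT.
  by case=> x; rewrite !inE andbT => cl_x ->; split; [apply: imset_f | ].
have : #|A| <= 1.
  apply/card_le1_eqP => t t'; rewrite !inE => /eqP <- /eqP /(congr1 val).
  rewrite /= !inordK ?ltn_pmod // => /eqP.
  by rewrite eqn_modDl !modn_small ?(leq_trans (ltn_ord _) s_le_n) // => /eqP /val_inj.
by case: #|A| => [|[|]] //; [left | right; rewrite mul1n].
Qed.

Lemma block_edge_sigma_edge k : 0 < D -> k < N ->
  sigma_edge (s * D) (nseq s D) (block_edge k).
Proof.
move=> D_gt0 lt_k; apply: uniform_sigma_edge => //; first exact: card_block_edge.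
by move=> i; apply: block_edge_class_count.
Qed.

Definition block_matching := [set block_edge k | k : 'I_N].

Lemma block_matching_is_matching : 0 < D ->
  is_matching (s * D) (nseq s D) block_matching.
Proof.
move=> D_gt0; apply/andP; split; apply/forallP => K; apply/implyP => /imsetP [k _ ->].
  exact: block_edge_sigma_edge.
apply/forallP => L; apply/implyP => /imsetP [k' _ ->]; apply/implyP => ne_kk'.
apply: contraR ne_kk' => /pred0Pn [_ /andP [/imsetP [x _ ->]]].
by case/imsetP=> x' _ /edge_vertex_inj [||/val_inj ->].
Qed.

Lemma card_block_matching : 0 < s -> 0 < D -> #|block_matching| = N.
Proof.
move=> s_gt0 D_gt0; rewrite card_imset ?card_ord // => k k' eq_kk'.
pose x0 : 'I_s * 'I_D := (Ordinal s_gt0, Ordinal D_gt0).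
have : edge_vertex k x0 \in block_edge k' by rewrite -eq_kk' imset_f.
by case/imsetP=> x' _ /edge_vertex_inj [||/val_inj].
Qed.

Lemma nu_ge : 0 < s -> 0 < D -> N <= nu n (s * D) q (nseq s D).
Proof.
move=> s_gt0 D_gt0; rewrite -card_block_matching //.
exact/leq_bigmax_cond/block_matching_is_matching.
Qed.

End BlockMatching.

Theorem theorem3p7 (Delta s n q : nat) :
  1 <= Delta -> 1 <= s ->
  (s * Delta).+1 ^ 2 <= n ->
  (s * Delta) * Delta <= q ->
  nu n (s * Delta) q (nseq s Delta) =
    (n * (q - q %% Delta)) %/ (s * Delta).
Proof.
move=> Delta_gt0 s_gt0 n_ge q_ge.
have s_le_n : s <= n by nia.
case: n n_ge s_le_n => [|n'] n_ge s_le_n; first by rewrite leqn0 in n_ge.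
case: q q_ge => [|q'] q_ge; first by nia.
have -> : q'.+1 - q'.+1 %% Delta = q'.+1 %/ Delta * Delta.
  by rewrite {1}(divn_eq q'.+1 Delta) addnK.
apply/eqP; rewrite eqn_leq nu_le ?muln_gt0 ?s_gt0 ?all_nseq ?dvdnn ?orbT //=.
by rewrite mulnA divnMr // nu_ge.
Qed.
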